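(* Let $\phi:\mathbb{N}_0\to\mathbb{N}_0$ satisfy $\phi(0)=0$ and $\phi(x)\neq x$ for all $x\in\mathbb{N}$. If $\phi$ has a cycle (i.e. there exist $m\ge2$ and $x\in\mathbb{N}$ with $\phi^m(x)=x$), then there exists an integer $N\ge2$ such that $\det\widehat{M}_n(\phi)=0$ for all $n\ge N$.
   Context: $\mathbb{N}=\{1,2,\dots\}$, $\mathbb{N}_0=\mathbb{N}\cup\{0\}$, $D_n=\{1,\dots,n\}$, $D_{n,0}=D_n\cup\{0\}$. The local function $\phi_n:D_{n,0}\to D_{n,0}$ is $\phi_n(x)=\phi(x)$ if $x\in D_n$ and $\phi(x)\in D_n$, and $\phi_n(x)=0$ otherwise. For $1\le i\le n$, $\mathbf{e}_i$ is the $i$-th unit vector in $\mathbb{Z}^n$ and $\mathbf{e}_0$ is the zero vector. $M_n(\phi)$ is the $n\times n$ matrix whose $j$-th column is $\mathbf{e}_{\phi_n(j)}$ ($1\le j\le n$), and $\widehat{M}_n(\phi)=I-M_n(\phi)$. *)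

From mathcomp Require Import all_boot all_order all_algebra.
Set Implicit Arguments. Unset Strict Implicit. Unset Printing Implicit Defensive.
Import GRing.Theory.
Local Open Scope ring_scope.

Definition phi_loc (phi : nat -> nat) (n x : nat) : nat :=
  if (1 <= x <= n)%N && (1 <= phi x <= n)%N then phi x else 0%N.

(* unit vector e_k in Z^n (as a column), e_0 = 0; coordinate i : 'I_n is i+1 *)
Definition unit_vec (n k : nat) : 'cV[int]_n :=
  \col_(i < n) (if k == i.+1 then 1 else 0).

(* M_n(phi): j-th column (j : 'I_n standing for j+1) is e_{phi_n(j+1)} *)
Definition Mphi (phi : nat -> nat) (n : nat) : 'M[int]_n :=
  \matrix_(i < n, j < n) unit_vec n (phi_loc phi n j.+1) i 0.

Definition Mhat (phi : nat -> nat) (n : nat) : 'M[int]_n := 1%:M - Mphi phi n.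

(* Let C be the cycle of phi through x. For n large enough C lies in D_n, so
   phi_n agrees with phi on C and permutes it; hence the columns of M_n(phi)
   indexed by C form a permutation matrix on the coordinates of C. The
   indicator vector of C is then fixed by M_n(phi), i.e. lies in the kernel of
   Mhat_n(phi), which is therefore singular. *)

From mathcomp Require Import all_boot all_order all_algebra.

Set Implicit Arguments.
Unset Strict Implicit.
Unset Printing Implicit Defensive.

Import GRing.Theory.
Local Open Scope ring_scope.

Lemma det_eq0_of_mulmx_eq0 (R : idomainType) n (A : 'M[R]_n) (v : 'cV[R]_n) :
  v != 0 -> A *m v = 0 -> \det A = 0.
Proof.
move=> nz_v Av0; apply/eqP.
have : \det A *: v == 0 by rewrite -mul_scalar_mx -mul_adj_mx -mulmxA Av0 mulmx0.
by rewrite scalemx_eq0 (negPf nz_v) orbF.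
Qed.

Definition indicator_vec (pT : predType nat) (n : nat) (A : pT) : 'cV[int]_n :=
  \col_(i < n) (i.+1 \in A)%:R.

Section InvariantSet.

Variables (phi : nat -> nat) (n : nat) (pT : predType nat) (A : pT).
Hypothesis A_range : {in A, forall y, 1 <= y <= n}%N.
Hypothesis phiA : {in A, forall y, phi y \in A}.
Hypothesis phiA_inj : {in A &, injective phi}.
Hypothesis phiA_onto : {in A, forall y, exists2 z, z \in A & phi z = y}.

Lemma phi_loc_in y : y \in A -> phi_loc phi n y = phi y.
Proof. by move=> Ay; rewrite /phi_loc !A_range ?phiA. Qed.

Lemma Mphi_entry_in i (j : 'I_n) :
  j.+1 \in A -> Mphi phi n i j = (phi j.+1 == i.+1)%:R.
Proof. by move=> Aj; rewrite !mxE phi_loc_in //; case: eqP. Qed.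

Lemma Mphi_indicator : Mphi phi n *m indicator_vec n A = indicator_vec n A.
Proof.
apply/colP => i; rewrite mxE [RHS]mxE.
under eq_bigr => j _ do rewrite [indicator_vec _ _ _ _]mxE.
have Mphi0 (j : 'I_n) : j.+1 \in A -> phi j.+1 != i.+1 -> Mphi phi n i j = 0.
  by move=> Aj /negPf phij; rewrite Mphi_entry_in // phij.
have [Ai | nAi] := boolP (i.+1 \in A); last first.
  rewrite big1 // => j _; have [Aj | _] := boolP (j.+1 \in A); last by rewrite mulr0.
  by rewrite Mphi0 ?mul0r //; apply: contraNneq nAi => <-; apply: phiA.
have [z Az phiz] := phiA_onto Ai.
have /andP [z_gt0 z_le_n] := A_range Az.
have z_lt_n : (z.-1 < n)%N by rewrite prednK.
pose j0 := Ordinal z_lt_n.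
have j0E : j0.+1 = z by rewrite /= prednK.
rewrite (bigD1 j0) // -[RHS]addr0; congr (_ + _).
  by rewrite Mphi_entry_in j0E // phiz eqxx Az mulr1.
rewrite big1 // => j j_neq.
have [Aj | _] := boolP (j.+1 \in A); last by rewrite mulr0.
rewrite Mphi0 ?mul0r //; apply: contra j_neq => /eqP phij.
by apply/eqP/val_inj/succn_inj; rewrite j0E; apply: phiA_inj; rewrite ?phij ?phiz.
Qed.

Lemma Mhat_indicator : Mhat phi n *m indicator_vec n A = 0.
Proof. by rewrite /Mhat mulmxBl mul1mx Mphi_indicator subrr. Qed.

End InvariantSet.

Section Cycle.

Variables (phi : nat -> nat) (m x : nat).
Hypothesis m_gt0 : (0 < m)%N.
Hypothesis x_periodic : iter m phi x = x.

Local Notation C := (traject phi x m).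

Lemma iter_in_cycle k : iter k phi x \in C.
Proof.
apply/loopingP; rewrite /looping x_periodic -(prednK m_gt0).
by rewrite trajectS mem_head.
Qed.

Lemma cycleP y : reflect (exists k, y = iter k phi x) (y \in C).
Proof.
apply: (iffP idP) => [/trajectP [k _ ->] | [k ->]]; last exact: iter_in_cycle.
by exists k.
Qed.

Lemma cycle_phi_closed : {in C, forall y, phi y \in C}.
Proof. by move=> _ /cycleP [k ->]; rewrite -iterS iter_in_cycle. Qed.

Lemma cycle_periodic : {in C, forall y, iter m phi y = y}.
Proof. by move=> _ /cycleP [k ->]; rewrite -iterD addnC iterD x_periodic. Qed.

Lemma cycle_phi_inj : {in C &, injective phi}.
Proof.
move=> y z Cy Cz phiyz.
by rewrite -(cycle_periodic Cy) -(cycle_periodic Cz) -(prednK m_gt0) !iterSr phiyz.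
Qed.

Lemma cycle_phi_onto : {in C, forall y, exists2 z, z \in C & phi z = y}.
Proof.
move=> y Cy; exists (iter m.-1 phi y).
  by case/cycleP: Cy => k ->; rewrite -iterD iter_in_cycle.
by rewrite -iterS prednK // cycle_periodic.
Qed.

Lemma cycle_gt0 : phi 0 = 0%N -> (0 < x)%N -> {in C, forall y, 0 < y}%N.
Proof.
move=> phi0 x_gt0 y /trajectP [k k_lt_m y_def]; rewrite lt0n; apply/eqP => y0.
have : iter (m - k) phi y = x by rewrite y_def -iterD (subnK (ltnW k_lt_m)).
by rewrite y0 iter_fix // => x0; rewrite -x0 in x_gt0.
Qed.

End Cycle.

Theorem corollary1p4 (phi : nat -> nat) :
  phi 0%N = 0%N ->
  (forall x : nat, (1 <= x)%N -> phi x <> x) ->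
  (exists m x : nat, [/\ (2 <= m)%N, (1 <= x)%N & iter m phi x = x]) ->
  exists N : nat, (2 <= N)%N /\
    forall n : nat, (N <= n)%N -> \det (Mhat phi n) = 0.
Proof.
move=> phi0 _ [m [x [m_ge2 x_gt0 x_periodic]]].
have m_gt0 : (0 < m)%N by apply: leq_trans m_ge2.
pose C := traject phi x m.
exists (maxn 2 (\max_(y <- C) y)); split=> [|n]; first exact: leq_maxl.
rewrite geq_max => /andP [_ max_le_n].
have C_range : {in C, forall y, 1 <= y <= n}%N.
  move=> y Cy; rewrite (cycle_gt0 x_periodic phi0 x_gt0 Cy).
  exact: leq_trans (leq_bigmax_seq _ Cy isT) max_le_n.
have Cx : x \in C := iter_in_cycle m_gt0 x_periodic 0.
apply: (det_eq0_of_mulmx_eq0 _ (Mhat_indicator C_range _ _ _)).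
- have /andP [_ x_le_n] := C_range _ Cx.
  have x_lt_n : (x.-1 < n)%N by rewrite prednK.
  apply/eqP => /colP /(_ (Ordinal x_lt_n)).
  by rewrite !mxE /= prednK // Cx.
- exact: cycle_phi_closed.
- exact: cycle_phi_inj.
- exact: cycle_phi_onto.
Qed.
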